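(* Consider the CPDE on $\mathbb Z$ built from the graphical construction, and fix $r_0\in\mathbb N$, $T>0$. Almost surely the following holds: for all $k\in\mathbb Z$ and $n\in\mathbb N$, if there is $x\in B_{k,n}$ with $\eta_{nT}(x)=1$, then $k\in Z_n$. In particular, $Z_n=\emptyset$ implies $\eta_{nT}\equiv0$ almost surely.
   Context: Graphical construction of the CPDE on $\mathbb Z$ (edges $E=\{\{x,x+1\}\}$, parameters $v,p,\lambda$): independent Poisson processes $\mathcal O^e$ (rate $vp$), $\mathcal C^e$ (rate $v(1-p)$), $\mathcal I^e$ (rate $\lambda$) for $e\in E$ and $\mathcal R^x$ (rate 1) for $x\in\mathbb Z$; $\zeta_0$ is product Bernoulli($p$) and $\zeta_t(e)=1$ iff the last point of $(\mathcal O^e\cup\mathcal C^e)\cap[0,t]$ is in $\mathcal O^e$ (or $\zeta_0(e)=1$ if none). A valid path is a path in $\mathbb Z\times[0,\infty)$ with nondecreasing time, moving along $\{x\}\times[a,b]$ only if $\mathcal R^x\cap[a,b]=\emptyset$, and jumping across $e$ at a time $t\in\mathcal I^e$ only if $\zeta_t(e)=1$. $\eta_t$ is the set of $z$ reachable by a valid path from $\{(x,0):\eta_0(x)=1\}$ to $(z,t)$, with $\eta_0$ finite. Blocks: an edge $e$ is $n$-closed if $\zeta_t(e)=0$ for all $t\in[nT,(n+1)T)$. $V_{\{k,k+1\},n}=1$ iff no edge between $kr_0$ and $(k+1)r_0$ is $n$-closed. $e_{k,n}$ is the leftmost $n$-closed edge between $kr_0$ and $(k+1)r_0$, or $\{(k+1)r_0-1,(k+1)r_0\}$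 if none exists; $B_{k,n}=[e^+_{k-1,n},e^-_{k,n}]\cap\mathbb Z$ where $e^-,e^+$ are the left and right endpoints of $e$. $U_{k,n}=1$ iff there is a valid path contained in $B_{k,n}\times[nT,(n+1)T)$ starting at time $nT$ and ending at time $(n+1)T$. Graph $H$ on $\mathbb Z\times\mathbb N$: if $U_{k,n}=1$ add edges from $(k,n)$ to $(k-1,n+1),(k,n+1),(k+1,n+1)$; if $V_{\{k,k+1\},n}=1$ add these edges for both $(k,n)$ and $(k+1,n)$ and also the edge $(k,n)$–$(k+1,n)$. An $H$-valid path is a sequence of $H$-adjacent vertices $(k_0,n_0),\dots,(k_f,n_f)$ with $n_0\le\dots\le n_f$ and $n_i<n_f$ for all $i<f$. $Z_0=\{k:B_{k,0}$ contains an initially infected site$\}$ and for $n\ge1$, $Z_n$ is the set of $k$ such that some $H$-valid path goes from $Z_0\times\{0\}$ to $(k,n)$. *)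

From Stdlib Require Import Reals ZArith List.
Open Scope R_scope.

(** A realization of the graphical construction of the CPDE on Z.
    The edge {x, x+1} is indexed by its left endpoint x : Z.
    Poisson point processes are represented by their (random) point sets,
    i.e. predicates on R. *)
Record GC := {
  gc_O : Z -> R -> Prop;      (* opening marks  O^e, rate v p       *)
  gc_C : Z -> R -> Prop;      (* closing marks  C^e, rate v (1-p)   *)
  gc_I : Z -> R -> Prop;      (* infection marks I^e, rate lambda   *)
  gc_R : Z -> R -> Prop;      (* recovery marks R^x, rate 1         *)
  gc_zeta0 : Z -> Prop;
  gc_eta0 : Z -> Prop
}.

Definition zeta (g : GC) (t : R) (e : Z) : Prop :=
  (exists s, 0 <= s <= t /\ gc_O g e s /\
     forall u, 0 <= u <= t -> (gc_O g e u \/ gc_C g e u) -> u <= s)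
  \/ ((forall u, 0 <= u <= t -> ~ gc_O g e u /\ ~ gc_C g e u) /\ gc_zeta0 g e).

(** Valid paths from (x,s) to (y,t), all of whose sites lie in A
    (A = everything for unrestricted valid paths). *)
Inductive vpath (g : GC) (A : Z -> Prop) : Z -> R -> Z -> R -> Prop :=
| vp_refl : forall x t, A x -> vpath g A x t x t
| vp_stay : forall x s t, A x -> s <= t ->
    (forall u, s <= u <= t -> ~ gc_R g x u) -> vpath g A x s x t
| vp_right : forall x t, A x -> A (x + 1)%Z -> gc_I g x t -> zeta g t x ->
    vpath g A x t (x + 1)%Z t
| vp_left : forall x t, A x -> A (x + 1)%Z -> gc_I g x t -> zeta g t x ->
    vpath g A (x + 1)%Z t x t
| vp_trans : forall x s y t z u,
    vpath g A x s y t -> vpath g A y t z u -> vpath g A x s z u.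

Definition eta (g : GC) (t : R) (z : Z) : Prop :=
  exists x, gc_eta0 g x /\ vpath g (fun _ => True) x 0 z t.

Section Blocks.
Variables (g : GC) (r0 : nat) (T : R).
Let r := Z.of_nat r0.

Definition nclosed (n : nat) (e : Z) : Prop :=
  forall t, INR n * T <= t < INR (S n) * T -> ~ zeta g t e.

Definition between (a b e : Z) : Prop := (a <= e /\ e + 1 <= b)%Z.

Definition Vb (k : Z) (n : nat) : Prop :=
  forall e, between (k * r) ((k + 1) * r) e -> ~ nclosed n e.

Definition eleft (k : Z) (n : nat) (x : Z) : Prop :=
  (between (k * r) ((k + 1) * r) x /\ nclosed n x /\
     forall y, between (k * r) ((k + 1) * r) y -> (y < x)%Z -> ~ nclosed n y)
  \/ ((forall y, between (k * r) ((k + 1) * r) y -> ~ nclosed n y) /\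
      x = ((k + 1) * r - 1)%Z).

Definition inB (k : Z) (n : nat) (y : Z) : Prop :=
  exists a b, eleft (k - 1) n a /\ eleft k n b /\ (a + 1 <= y <= b)%Z.

Definition Ub (k : Z) (n : nat) : Prop :=
  exists x y, vpath g (inB k n) x (INR n * T) y (INR (S n) * T).

Definition Hedge0 (a b : Z * nat) : Prop :=
  let (k, n) := a in let (k', n') := b in
     (Ub k n /\ n' = S n /\ (k' = k - 1 \/ k' = k \/ k' = k + 1)%Z)
  \/ (Vb k n /\ n' = S n /\ (k' = k - 1 \/ k' = k \/ k' = k + 1)%Z)
  \/ (Vb (k - 1) n /\ n' = S n /\ (k' = k - 1 \/ k' = k \/ k' = k + 1)%Z)
  \/ (Vb k n /\ n' = n /\ k' = (k + 1)%Z).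

Definition Hadj (a b : Z * nat) : Prop := Hedge0 a b \/ Hedge0 b a.

Definition Z0set (k : Z) : Prop := exists x, inB k 0 x /\ gc_eta0 g x.

Definition Zset (n : nat) (k : Z) : Prop :=
  match n with
  | O => Z0set k
  | S _ =>
      exists (f : nat) (s : nat -> Z * nat),
        Z0set (fst (s O)) /\ snd (s O) = O /\ s f = (k, n) /\
        forall i, (i < f)%nat ->
          Hadj (s i) (s (S i)) /\ (snd (s i) <= snd (s (S i)))%nat /\
          (snd (s i) < n)%nat
  end.

End Blocks.

From Pilot Require Import Defs.
From Stdlib Require Import Reals ZArith List Lia Lra Classical.
Import Pilot.Defs.
Open Scope R_scope.

(* A site infected at time (n+1)T is reached by a valid path
   from a site z infected at time nT, and z lies in a block B_{j,n} with j in Z_n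
   by induction.  Follow the path through [nT, (n+1)T): it can leave its current
   block only across an open edge, which must then be the default boundary of a
   block without n-closed edges, so V = 1 there and the new block is H-adjacent
   at level n.  Either the path ends inside the last block (so U = 1) or some V
   equals 1; in both cases H joins that block to the three blocks of level n+1
   around it, one of which is the block of the endpoint. *)

Lemma vpath_time_le g A x s y t : vpath g A x s y t -> s <= t.
Proof. induction 1; lra. Qed.

Lemma vpath_split g A x s y u : vpath g A x s y u ->
  forall t, s <= t <= u -> exists z, vpath g A x s z t /\ vpath g A z t y u.
Proof.
  induction 1 as [x t0 Ax | x s0 t0 Ax Hst HR | x t0 Ax Ax1 HI Hz | x t0 Ax Ax1 HI Hz
                 | x s0 y t0 z u0 Hxy IHxy Hyz IHyz]; intros t Ht.
  - assert (t = t0) by lra; subst.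
    exists x; split; constructor; auto.
  - exists x; split; apply vp_stay; auto; try lra; intros; apply HR; lra.
  - assert (t = t0) by lra; subst.
    exists x; split; [apply vp_refl | apply vp_right]; auto.
  - assert (t = t0) by lra; subst.
    exists (x + 1)%Z; split; [apply vp_refl | apply vp_left]; auto.
  - pose proof (vpath_time_le _ _ _ _ _ _ Hxy).
    pose proof (vpath_time_le _ _ _ _ _ _ Hyz).
    destruct (Rle_dec t t0).
    + destruct (IHxy t) as [w [Hxw Hwy]]; [lra |].
      exists w; split; [| eapply vp_trans]; eauto.
    + destruct (IHyz t) as [w [Hyw Hwz]]; [lra |].
      exists w; split; [eapply vp_trans |]; eauto.
Qed.

Lemma vpath_instant_eq g A x s y t : vpath g A x s y t -> s = t ->
  (forall e, ~ gc_I g e s) -> x = y.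
Proof.
  induction 1 as [| | x t0 | x t0 | x s0 y t0 z u0 Hxy IHxy Hyz IHyz];
    intros Est HI; auto.
  - exfalso; eapply HI; eauto.
  - exfalso; eapply HI; eauto.
  - pose proof (vpath_time_le _ _ _ _ _ _ Hxy).
    pose proof (vpath_time_le _ _ _ _ _ _ Hyz).
    assert (s0 = t0) by lra; subst.
    rewrite IHxy, IHyz; auto.
Qed.

Lemma Z_least_above (P : Z -> Prop) lo y : (lo <= y)%Z -> P y ->
  exists m, (lo <= m)%Z /\ P m /\ forall z, (lo <= z < m)%Z -> ~ P z.
Proof.
  intros Hy. assert (Hd : (y <= lo + Z.of_nat (Z.to_nat (y - lo)))%Z) by lia.
  revert Hd; generalize (Z.to_nat (y - lo)) as d; intros d Hd.
  revert y Hy Hd; induction d as [| d IH]; intros y Hy Hd Py.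
  - exists y; repeat split; auto; lia.
  - destruct (classic (exists z, (lo <= z <= lo + Z.of_nat d)%Z /\ P z))
      as [[z [Hz Pz]] | Hnone].
    + apply (IH z); auto; lia.
    + exists y; repeat split; auto.
      intros z Hz Pz; apply Hnone; exists z; split; auto; lia.
Qed.

Lemma Hadj_horizontal g r0 T j n : Vb g r0 T j n ->
  Hadj g r0 T (j, n) ((j + 1)%Z, n) /\ Hadj g r0 T ((j + 1)%Z, n) (j, n).
Proof. intros HV; split; [left | right]; simpl; right; right; right; auto. Qed.

Lemma Hadj_up g r0 T j k n :
  Ub g r0 T j n \/ Vb g r0 T j n \/ Vb g r0 T (j - 1) n ->
  (j - 1 <= k <= j + 1)%Z -> Hadj g r0 T (j, n) (k, S n).
Proof.
  intros Hj Hk; left; simpl.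
  assert (Hk' : (k = j - 1 \/ k = j \/ k = j + 1)%Z) by lia.
  destruct Hj as [HU | [HV | HV]]; [left | right; left | right; right; left]; auto.
Qed.

Section Blocks.

Variables (g : GC) (r0 : nat) (T : R).
Hypothesis r0_pos : (0 < r0)%nat.

Local Open Scope Z_scope.

Local Notation r := (Z.of_nat r0).
Local Notation B := (inB g r0 T).
Local Notation eleft := (eleft g r0 T).
Local Notation nclosed := (nclosed g T).
Local Notation Vb := (Vb g r0 T).

Lemma eleft_exists k n : exists x, eleft k n x.
Proof.
  destruct (classic (exists y, between (k * r) ((k + 1) * r) y /\ nclosed n y))
    as [[y [Hy Cy]] | Hnone].
  - destruct (Z_least_above
                (fun y => between (k * r) ((k + 1) * r) y /\ nclosed n y) (k * r) y)
      as [m [Hm [[Bm Cm] Hmin]]]; [unfold between in Hy; lia | auto |].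
    exists m; left; split; [exact Bm | split; [exact Cm |]].
    intros z Bz Hzm Cz; apply (Hmin z); [unfold between in Bz; lia | auto].
  - exists ((k + 1) * r - 1); right; split; [| reflexivity].
    intros y By Cy; apply Hnone; eauto.
Qed.

Lemma eleft_bounds k n x : eleft k n x -> k * r <= x /\ x + 1 <= (k + 1) * r.
Proof. intros [[Hx _] | [_ ->]]; unfold between in *; lia. Qed.

Lemma inB_bounds k n x : B k n x -> (k - 1) * r + 1 <= x <= (k + 1) * r - 1.
Proof.
  intros [a [b [Ha [Hb Hx]]]].
  apply eleft_bounds in Ha; apply eleft_bounds in Hb; lia.
Qed.

Lemma inB_near k j n m x : B k n x -> B j m x -> j - 1 <= k <= j + 1.
Proof.
  intros Hk Hj; apply inB_bounds in Hk; apply inB_bounds in Hj.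
  split; apply Z.lt_pred_le, (Z.mul_lt_mono_pos_r r); lia.
Qed.

Lemma inB_cover n x : exists k, B k n x.
Proof.
  set (k := x / r).
  assert (Hk : k * r <= x < (k + 1) * r).
  { pose proof (Z.mul_div_le x r ltac:(lia)).
    pose proof (Z.mod_pos_bound x r ltac:(lia)).
    pose proof (Z.div_mod x r ltac:(lia)). unfold k; lia. }
  destruct (eleft_exists (k - 1) n) as [a Ha].
  destruct (eleft_exists k n) as [b Hb].
  destruct (eleft_exists (k + 1) n) as [c Hc].
  pose proof (eleft_bounds _ _ _ Ha); pose proof (eleft_bounds _ _ _ Hb);
    pose proof (eleft_bounds _ _ _ Hc).
  destruct (Z_le_gt_dec x b).
  - exists k, a, b; repeat split; auto; lia.
  - exists (k + 1), b, c; rewrite Z.add_simpl_r; repeat split; auto; lia.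
Qed.

(* An edge that is not n-closed can be the right boundary e_{j,n} of B_{j,n}
   only as the default choice, which forces V_{{j,j+1},n} = 1. *)
Lemma inB_cross_right j n x : B j n x -> ~ nclosed n x ->
  B j n (x + 1) \/ (Vb j n /\ B (j + 1) n (x + 1)).
Proof.
  intros [a [b [Ha [Hb Hx]]]] Hopen.
  destruct (Z.eq_dec x b) as [-> | Hxb].
  - right; destruct Hb as [[_ [Cb _]] | [HV Hb]]; [contradiction |].
    destruct (eleft_exists (j + 1) n) as [c Hc].
    pose proof (eleft_bounds _ _ _ Hc).
    split; [exact HV |].
    exists b, c; rewrite Z.add_simpl_r.
    split; [right; split; assumption | split; [exact Hc | lia]].
  - left; exists a, b; repeat split; auto; lia.
Qed.

Lemma inB_cross_left j n x : B j n (x + 1) -> ~ nclosed n x ->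
  B j n x \/ (Vb (j - 1) n /\ B (j - 1) n x).
Proof.
  intros [a [b [Ha [Hb Hx]]]] Hopen.
  destruct (Z.eq_dec x a) as [-> | Hxa].
  - right; destruct Ha as [[_ [Ca _]] | [HV Ha]]; [contradiction |].
    destruct (eleft_exists (j - 1 - 1) n) as [c Hc].
    pose proof (eleft_bounds _ _ _ Hc).
    split; [exact HV |].
    exists c, a.
    split; [exact Hc | split; [right; split; assumption | nia]].
  - left; exists a, b; repeat split; auto; lia.
Qed.

End Blocks.

Section Tracking.

Variables (g : GC) (r0 : nat) (T : R).
Hypothesis r0_pos : (0 < r0)%nat.
Hypothesis T_pos : 0 < T.
Hypothesis no_infection_at_block_times : forall e m, ~ gc_I g e (INR m * T).

Local Notation B := (inB g r0 T).
Local Notation Hadj := (Hadj g r0 T).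

(* H-reachability from Z_0 x {0} with nondecreasing levels, all vertices
   before the last at level <= m; Z_{m+1} is the set of k with (k, m+1)
   reachable with bound m. *)
Definition Hreach (m : nat) (p : Z * nat) : Prop :=
  exists (f : nat) (s : nat -> Z * nat),
    Z0set g r0 T (fst (s O)) /\ snd (s O) = O /\ s f = p /\
    forall i, (i < f)%nat ->
      Hadj (s i) (s (S i)) /\ (snd (s i) <= snd (s (S i)))%nat /\
      (snd (s i) <= m)%nat.

Lemma Hreach_step m q p : Hreach m q -> Hadj q p ->
  (snd q <= snd p)%nat -> (snd q <= m)%nat -> Hreach m p.
Proof.
  intros [f [s [Hs0 [Hlev0 [Hsf Hsteps]]]]] Hqp Hlev Hm.
  exists (S f), (fun i => if Nat.leb i f then s i else p); cbn beta.
  rewrite (proj2 (Nat.leb_le 0 f)) by lia.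
  rewrite (proj2 (Nat.leb_gt (S f) f)) by lia.
  do 3 (split; auto).
  intros i Hi; rewrite (proj2 (Nat.leb_le i f)) by lia.
  destruct (Nat.leb (S i) f) eqn:Ei.
  - apply Nat.leb_le in Ei; apply Hsteps; lia.
  - apply Nat.leb_gt in Ei; assert (i = f) by lia; subst i; rewrite Hsf; auto.
Qed.

Lemma Hreach_of_Zset n k : Zset g r0 T n k -> Hreach n (k, n).
Proof.
  destruct n as [| n]; simpl.
  - intros Hk; exists O, (fun _ => (k, O)); repeat split; auto; lia.
  - intros [f [s [Hs0 [Hlev0 [Hsf Hsteps]]]]]; exists f, s; do 3 (split; auto).
    intros i Hi; destruct (Hsteps i Hi) as [? [? ?]]; repeat split; auto; lia.
Qed.

Lemma Zset_of_Hreach n j k : Hreach n (j, n) -> Hadj (j, n) (k, S n) ->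
  Zset g r0 T (S n) k.
Proof.
  intros Hj Hjk.
  destruct (Hreach_step _ _ _ Hj Hjk ltac:(simpl; lia) ltac:(simpl; lia))
    as [f [s [Hs0 [Hlev0 [Hsf Hsteps]]]]].
  exists f, s; do 3 (split; auto).
  intros i Hi; destruct (Hsteps i Hi) as [? [? ?]]; repeat split; auto; lia.
Qed.

(* The state of a valid path at time t in [nT, (n+1)T]: it sits in a block j
   reachable at level n, and either that block has U_{j,n} = 1 witnessed by
   the path so far, or one of its two V's equals 1. *)
Definition tracked (n : nat) (z : Z) (t : R) : Prop :=
  exists j, B j n z /\ Hreach n (j, n) /\
    (Vb g r0 T j n \/ Vb g r0 T (j - 1) n \/
     exists y, vpath g (B j n) y (INR n * T) z t).

Lemma jump_not_nclosed n x t : gc_I g x t -> zeta g t x ->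
  INR n * T <= t <= INR (S n) * T -> ~ nclosed g T n x.
Proof.
  intros Hinf Hopen Ht Hclosed.
  destruct (Rle_lt_or_eq_dec _ _ (proj2 Ht)) as [Hlt | Heq].
  - apply (Hclosed t); auto; lra.
  - subst t; eapply no_infection_at_block_times; eauto.
Qed.

Lemma tracked_vpath n A x s y t : vpath g A x s y t ->
  INR n * T <= s -> t <= INR (S n) * T -> tracked n x s -> tracked n y t.
Proof.
  induction 1 as [| x s0 t0 Ax Hst HR | x t0 Ax Ax1 Hinf Hopen | x t0 Ax Ax1 Hinf Hopen
                 | x s0 y t0 z u0 Hxy IHxy Hyz IHyz]; intros Hs Ht Hx; auto.
  - destruct Hx as [j [Bx [Hj [HV | [HV | [y Hy]]]]]];
      exists j; do 2 (split; auto); right; right.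
    exists y; eapply vp_trans; [exact Hy | apply vp_stay; auto].
  - pose proof (jump_not_nclosed n x t0 Hinf Hopen ltac:(lra)) as Hnc.
    destruct Hx as [j [Bx [Hj Hd]]].
    destruct (inB_cross_right g r0 T r0_pos j n x Bx Hnc) as [Bx1 | [HV Bx1]].
    + exists j; do 2 (split; auto).
      destruct Hd as [HV | [HV | [y Hy]]]; auto; right; right.
      exists y; eapply vp_trans; [exact Hy | apply vp_right; auto].
    + exists (j + 1)%Z; split; [exact Bx1 | split].
      * apply (Hreach_step _ (j, n)); simpl; auto.
        apply (Hadj_horizontal g r0 T); exact HV.
      * right; left; rewrite Z.add_simpl_r; exact HV.
  - pose proof (jump_not_nclosed n x t0 Hinf Hopen ltac:(lra)) as Hnc.
    destruct Hx as [j [Bx1 [Hj Hd]]].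
    destruct (inB_cross_left g r0 T r0_pos j n x Bx1 Hnc) as [Bx | [HV Bx]].
    + exists j; do 2 (split; auto).
      destruct Hd as [HV | [HV | [y Hy]]]; auto; right; right.
      exists y; eapply vp_trans; [exact Hy | apply vp_left; auto].
    + exists (j - 1)%Z; split; [exact Bx | split; [| left; exact HV]].
      apply (Hreach_step _ (j, n)); simpl; auto.
      pose proof (proj2 (Hadj_horizontal g r0 T _ n HV)) as Hadj_back.
      rewrite Z.sub_add in Hadj_back; exact Hadj_back.
  - pose proof (vpath_time_le _ _ _ _ _ _ Hxy).
    pose proof (vpath_time_le _ _ _ _ _ _ Hyz).
    apply IHyz; try lra; apply IHxy; auto; lra.
Qed.

Lemma Zset_of_eta n k x : B k n x -> eta g (INR n * T) x -> Zset g r0 T n k.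
Proof.
  revert k x; induction n as [| n IH]; intros k x Bx [x0 [Hx0 Hpath]].
  - simpl; exists x; split; auto.
    replace x with x0; auto.
    eapply vpath_instant_eq; [exact Hpath | simpl; ring |].
    intros e He; apply (no_infection_at_block_times e 0); simpl.
    rewrite Rmult_0_l; exact He.
  - assert (Hlevels : 0 <= INR n * T <= INR (S n) * T).
    { rewrite S_INR; pose proof (pos_INR n); nra. }
    destruct (vpath_split _ _ _ _ _ _ Hpath _ Hlevels) as [z [Hx0z Hzx]].
    destruct (inB_cover g r0 T r0_pos n z) as [j Bz].
    assert (Hz : tracked n z (INR n * T)).
    { exists j; split; [exact Bz | split].
      - apply Hreach_of_Zset, (IH j z Bz); exists x0; auto.
      - right; right; exists z; apply vp_refl; exact Bz. }
    destruct (tracked_vpath _ _ _ _ _ _ Hzx (Rle_refl _) (Rle_refl _) Hz)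
      as [j' [Bx' [Hj' Hd]]].
    apply (Zset_of_Hreach n j'); auto.
    apply (Hadj_up g r0 T j' k n); [| exact (inB_near g r0 T r0_pos _ _ _ _ _ Bx Bx')].
    destruct Hd as [HV | [HV | [y Hy]]]; auto.
    left; exists y, x; exact Hy.
Qed.

End Tracking.

Theorem proposition3 (g : GC) (r0 : nat) (T : R) :
  (0 < r0)%nat -> 0 < T ->
  (* eta_0 is finite *)
  (exists l : list Z, forall x, gc_eta0 g x -> In x l) ->
  (* almost-sure regularity of the realization: no infection mark at a time mT *)
  (forall (e : Z) (m : nat), ~ gc_I g e (INR m * T)) ->
  (forall (k : Z) (n : nat) (x : Z),
      inB g r0 T k n x -> eta g (INR n * T) x -> Zset g r0 T n k)
  /\
  (forall n : nat, (forall k, ~ Zset g r0 T n k) ->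
      forall x, ~ eta g (INR n * T) x).
Proof.
  intros r0_pos T_pos _ HI; split.
  - intros k n x; apply Zset_of_eta; auto.
  - intros n Hempty x Hx.
    destruct (inB_cover g r0 T r0_pos n x) as [k Bx].
    apply (Hempty k); eapply Zset_of_eta; eauto.
Qed.
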